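(* Let $(X,\Pi)$ be a finite strictly quasiconvex quasisupermodular aggregative game. If $x^*$ is a fESS, then $x^*=\max X$ or $x^*=\min X$.
   Context: An aggregative game $(X,\Pi)$ consists of: a totally ordered action set $X$ (finite here) and a totally ordered set $Z$; a symmetric aggregator $a:X\times X\to Z$ ($a(x,y)=a(y,x)$) that is monotone increasing (if $x''\ge x'$, $y''\ge y'$ and $(x'',y'')\neq(x',y')$ then $a(x'',y'')>a(x',y')$); and $\Pi:X\times Z\to\mathbb{R}$, with underlying game payoff $\pi(x,y)=\Pi(x,a(x,y))$. Quasisupermodular: for all $z''>z'$ and $x''>x'$, $\Pi(x'',z')-\Pi(x',z')\ge0\Rightarrow\Pi(x'',z'')-\Pi(x',z'')\ge0$ and $\Pi(x'',z')-\Pi(x',z')>0\Rightarrow\Pi(x'',z'')-\Pi(x',z'')>0$. Strictly quasiconvex: for all $x<x'<x''$ in $X$ and $z\in Z$, $\Pi(x',z)<\max\{\Pi(x,z),\Pi(x'',z)\}$. fESS: $x^*$ with $\Pi(x^*,a(x^*,x))\ge\Pi(x,a(x^*,x))$ for all $x\in X$. *)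

From HB Require Import structures.
From mathcomp Require Import all_boot all_order all_algebra.
Set Implicit Arguments. Unset Strict Implicit. Unset Printing Implicit Defensive.
Import Order.TTheory GRing.Theory Num.Theory.
Local Open Scope order_scope.

Section AggregativeGame.
Variables (dX dZ : Order.disp_t) (X : finOrderType dX) (Z : orderType dZ)
  (R : realDomainType).

Definition symmetric_aggregator (a : X -> X -> Z) : Prop :=
  forall x y, a x y = a y x.

Definition monotone_increasing_aggregator (a : X -> X -> Z) : Prop :=
  forall x' x'' y' y'', x' <= x'' -> y' <= y'' -> (x'', y'') <> (x', y') ->
    a x' y' < a x'' y''.

Definition quasisupermodular (Pi : X -> Z -> R) : Prop :=
  forall (z' z'' : Z) (x' x'' : X), z' < z'' -> x' < x'' ->
    ((0 <= Pi x'' z' - Pi x' z')%R -> (0 <= Pi x'' z'' - Pi x' z'')%R) /\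
    ((0 < Pi x'' z' - Pi x' z')%R -> (0 < Pi x'' z'' - Pi x' z'')%R).

Definition strictly_quasiconvex (Pi : X -> Z -> R) : Prop :=
  forall (x x' x'' : X) (z : Z), x < x' -> x' < x'' ->
    (Pi x' z < Num.max (Pi x z) (Pi x'' z))%R.

Definition fESS (a : X -> X -> Z) (Pi : X -> Z -> R) (xs : X) : Prop :=
  forall x : X, (Pi x (a xs x) <= Pi xs (a xs x))%R.

End AggregativeGame.

From HB Require Import structures.
From mathcomp Require Import all_boot all_order all_algebra.
Set Implicit Arguments. Unset Strict Implicit. Unset Printing Implicit Defensive.
Import Order.TTheory GRing.Theory Num.Theory.
Local Open Scope order_scope.

(* Suppose l < xs < h and put z = a xs xs. The aggregate a xs l lies below z
   and a xs h above it. Quasisupermodularity carries the fESS inequality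
   Pi l (a xs l) <= Pi xs (a xs l) up to z and, read contrapositively,
   carries Pi h (a xs h) <= Pi xs (a xs h) down to z. So xs weakly beats both
   l and h at z, contradicting strict quasiconvexity of Pi _ z. *)

Section AggregativeGame.
Variables (dX dZ : Order.disp_t) (X : finOrderType dX) (Z : orderType dZ)
  (R : realDomainType).

Lemma aggregator_ltr (a : X -> X -> Z) (x y' y'' : X) :
  monotone_increasing_aggregator a -> y' < y'' -> a x y' < a x y''.
Proof.
move=> amono lty; apply: amono => //; first exact: ltW.
by case=> eqy; move: lty; rewrite eqy ltxx.
Qed.

Section Quasisupermodular.
Variable Pi : X -> Z -> R.
Hypothesis Pi_qsm : quasisupermodular Pi.

Lemma quasisupermodular_le_up (z' z'' : Z) (x' x'' : X) :
  z' < z'' -> x' < x'' ->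
  (Pi x' z' <= Pi x'' z')%R -> (Pi x' z'' <= Pi x'' z'')%R.
Proof. by move=> ltz ltx; have := (Pi_qsm ltz ltx).1; rewrite !subr_ge0. Qed.

Lemma quasisupermodular_ge_down (z' z'' : Z) (x' x'' : X) :
  z' < z'' -> x' < x'' ->
  (Pi x'' z'' <= Pi x' z'')%R -> (Pi x'' z' <= Pi x' z')%R.
Proof.
move=> ltz ltx; have := (Pi_qsm ltz ltx).2; rewrite !subr_gt0.
by rewrite !leNgt; apply: contra.
Qed.

End Quasisupermodular.

Lemma strictly_quasiconvex_no_interior_max (Pi : X -> Z -> R) (z : Z)
    (x x' x'' : X) :
  strictly_quasiconvex Pi -> x < x' -> x' < x'' ->
  (Pi x z <= Pi x' z)%R -> (Pi x'' z <= Pi x' z)%R -> False.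
Proof.
move=> Pi_sqc ltx ltx' le_x le_x''.
by have := Pi_sqc x x' x'' z ltx ltx'; rewrite lt_max !ltNge le_x le_x''.
Qed.

Section FiniteESS.
Variables (a : X -> X -> Z) (Pi : X -> Z -> R) (xs : X).
Hypotheses (amono : monotone_increasing_aggregator a)
  (Pi_qsm : quasisupermodular Pi) (xs_fESS : fESS a Pi xs).

Lemma fESS_le_below (l : X) : l < xs -> (Pi l (a xs xs) <= Pi xs (a xs xs))%R.
Proof.
move=> ltl.
exact: (quasisupermodular_le_up Pi_qsm (aggregator_ltr xs amono ltl) ltl).
Qed.

Lemma fESS_le_above (h : X) : xs < h -> (Pi h (a xs xs) <= Pi xs (a xs xs))%R.
Proof.
move=> lth.
exact: (quasisupermodular_ge_down Pi_qsm (aggregator_ltr xs amono lth) lth).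
Qed.

End FiniteESS.

End AggregativeGame.

Theorem lemma7 (dX dZ : Order.disp_t) (X : finOrderType dX) (Z : orderType dZ)
  (R : realDomainType) (a : X -> X -> Z) (Pi : X -> Z -> R) (xs : X) :
  symmetric_aggregator a ->
  monotone_increasing_aggregator a ->
  quasisupermodular Pi ->
  strictly_quasiconvex Pi ->
  fESS a Pi xs ->
  (forall x : X, x <= xs) \/ (forall x : X, xs <= x).
Proof.
move=> _ amono Pi_qsm Pi_sqc xs_fESS.
have [/forallP xs_max|/forallPn [h]] := boolP [forall x, x <= xs]; first by left.
rewrite -ltNge => lth.
have [/forallP xs_min|/forallPn [l]] := boolP [forall x, xs <= x]; first by right.
rewrite -ltNge => ltl.
exfalso; apply: (strictly_quasiconvex_no_interior_max (z := a xs xs) Pi_sqc ltl lth).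
- exact: (fESS_le_below amono Pi_qsm xs_fESS ltl).
- exact: (fESS_le_above amono Pi_qsm xs_fESS lth).
Qed.
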